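(* Let $v$ be a weight on $[0,1)$ satisfying $\lim_{r\to1^-}v(r)=0$ and let $t\in[0,1)$. Identifying the bidual $(H^0_v)''$ with $H^\infty_v$ via the canonical isometric isomorphism, the bi-transpose $C_t''\colon H^\infty_v\to H^\infty_v$ of $C_t\colon H^0_v\to H^0_v$ coincides with $C_t\colon H^\infty_v\to H^\infty_v$.
   Context: $\mathbb{D}=\{z\in\mathbb{C}:|z|<1\}$ and $H(\mathbb{D})$ is the space of holomorphic functions on $\mathbb{D}$. A weight is a continuous non-increasing function $v\colon[0,1)\to(0,\infty)$, extended to $\mathbb{D}$ by $v(z):=v(|z|)$. $H^\infty_v=\{f\in H(\mathbb{D}):\|f\|_{\infty,v}:=\sup_{z\in\mathbb{D}}|f(z)|v(z)<\infty\}$ and $H^0_v=\{f\in H(\mathbb{D}):\lim_{|z|\to1^-}|f(z)|v(z)=0\}$, both with the norm $\|\cdot\|_{\infty,v}$. When $\lim_{r\to1^-}v(r)=0$, $H^\infty_v$ is canonically isometric to $(H^0_v)''$: letting $X$ be the Banach space of linear functionals on $H^\infty_v$ whose restriction to the closed unit ball $U_v$ of $H^\infty_v$ is continuous for the topology of uniform convergence on compact subsets of $\mathbb{D}$ (normed by $\sup_{f\in U_v}|F(f)|$), the restriction map $F\mapsto F|_{H^0_v}$ is an isometric isomorphism of $X$ onto $(H^0_v)'$, and the evaluation map $f\mapsto(F\mapsto F(f))$ is an isometric isomorphism of $H^\infty_v$ onto $X'$; composing gives $H^\infty_v\cong(H^0_v)''$. For $t\in[0,1]$ the generalized Cesàro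 operator $C_t$ is defined on $f\in H(\mathbb{D})$ by $C_tf(0)=f(0)$ and $C_tf(z)=\frac{1}{z}\int_0^z\frac{f(\xi)}{1-t\xi}\,d\xi$ for $z\neq0$; for $t\in[0,1)$ it maps $H^0_v$ and $H^\infty_v$ continuously into themselves. *)

From Stdlib Require Import Reals.
From Coquelicot Require Import Coquelicot.
Open Scope R_scope.

Definition inD (z : C) : Prop := Cmod z < 1.

Definition is_weight (v : R -> R) : Prop :=
  (forall r, 0 <= r < 1 -> continuity_pt v r) /\
  (forall r s, 0 <= r -> r <= s -> s < 1 -> v s <= v r) /\
  (forall r, 0 <= r < 1 -> 0 < v r).

(* Elements of H(D) are represented as functions C -> C that are complex
   differentiable at every point of D and vanish outside D (canonical
   representative, so that H(D) is literally a set of functions). *)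
Definition holD (f : C -> C) : Prop :=
  (forall z, inD z -> ex_derive (K:=C_AbsRing) (V:=C_NormedModule) f z) /\
  (forall z, ~ inD z -> f z = 0%C).

Definition wbound (v : R -> R) (f : C -> C) (c : R) : Prop :=
  forall z, inD z -> Cmod (f z) * v (Cmod z) <= c.

Definition Hinf (v : R -> R) (f : C -> C) : Prop :=
  holD f /\ exists c, wbound v f c.

Definition H0 (v : R -> R) (f : C -> C) : Prop :=
  holD f /\
  forall eps, 0 < eps -> exists r, r < 1 /\
    forall z, r < Cmod z -> Cmod z < 1 -> Cmod (f z) * v (Cmod z) < eps.

Definition Uv (v : R -> R) (f : C -> C) : Prop := holD f /\ wbound v f 1.

Definition fadd (f g : C -> C) : C -> C := fun z => (f z + g z)%C.
Definition fscal (a : C) (f : C -> C) : C -> C := fun z => (a * f z)%C.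

Definition linear_on (S : (C -> C) -> Prop) (F : (C -> C) -> C) : Prop :=
  (forall f g, S f -> S g -> F (fadd f g) = (F f + F g)%C) /\
  (forall a f, S f -> F (fscal a f) = (a * F f)%C).

Definition in_dual0 (v : R -> R) (phi : (C -> C) -> C) : Prop :=
  linear_on (H0 v) phi /\
  exists M, forall h c, H0 v h -> 0 <= c -> wbound v h c -> Cmod (phi h) <= M * c.

(* Continuity of the restriction of F to U_v for the topology tau_0 of
   uniform convergence on compact subsets of D (neighbourhood base given by
   the closed discs of radius r < 1). *)
Definition tau0_cont_on_Uv (v : R -> R) (F : (C -> C) -> C) : Prop :=
  forall f, Uv v f -> forall eps, 0 < eps ->
    exists r delta, 0 <= r < 1 /\ 0 < delta /\
      forall g, Uv v g ->
        (forall z, Cmod z <= r -> Cmod (g z - f z)%C < delta) ->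
        Cmod (F g - F f)%C < eps.

(* The space X (predual of H^infty_v). *)
Definition in_X (v : R -> R) (F : (C -> C) -> C) : Prop :=
  linear_on (Hinf v) F /\ tau0_cont_on_Uv v F.

(* Generalized Cesaro operator: C_t f(0) = f(0),
   C_t f(z) = (1/z) int_0^z f(xi)/(1 - t xi) dxi  (integral along [0,z],
   parametrized xi = s z, dxi = z ds), and 0 outside D. *)
Definition Ces (t : R) (f : C -> C) : C -> C := fun z =>
  if Rlt_dec (Cmod z) 1 then
    if Req_EM_T (Cmod z) 0 then f 0%C
    else (/ z * RInt (V:=C_R_CompleteNormedModule)
             (fun s : R => (z * (f (RtoC s * z) / (1 - RtoC t * (RtoC s * z)))))%C
             0 1)%C
  else 0%C.

(* Both sides are τ0-continuous in f on bounded subsets of H^∞_v, and they agree on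
   H^0_v by the hypotheses on F and G.  The dilations f(ρ ·), ρ < 1, lie in H^0_v, stay
   in the ball of H^∞_v containing f, and converge to f uniformly on compact sets as
   ρ -> 1; since C_t h (z) is an average of h(sz)/(1 - tsz) over s in [0, 1], the same
   holds for C_t f(ρ ·) -> C_t f.  Passing to the limit gives G f = F (C_t f).
   The substantial point is that C_t f is again holomorphic: z C_t f (z) is a primitive
   of f/(1 - t ·) along segments from 0, and it is complex differentiable because
   integrals of holomorphic functions over triangles vanish (Goursat's theorem, by
   nested midpoint subdivision). *)

From Stdlib Require Import Reals Lra Lia Psatz Classical ClassicalEpsilon FunctionalExtensionality.
From Coquelicot Require Import Coquelicot.
Open Scope R_scope.

Ltac C_field :=
  apply injective_projections;
  unfold Cdiv, Cinv, Cplus, Cminus, Cmult, Copp, RtoC; simpl; field.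

Lemma Cmod_RtoC_mult (r : R) (z : C) : Cmod (RtoC r * z) = Rabs r * Cmod z.
Proof. rewrite Cmod_mult, Cmod_R. reflexivity. Qed.

Lemma Cmod_RtoC_mult_le (s : R) (z : C) : 0 <= s <= 1 -> Cmod (RtoC s * z) <= Cmod z.
Proof.
  intros Hs. rewrite Cmod_RtoC_mult, Rabs_pos_eq by lra.
  assert (0 <= Cmod z) by apply Cmod_ge_0. nra.
Qed.

Lemma Cmod_le_dist (z w : C) : Cmod w <= Cmod z + Cmod (w - z).
Proof. replace w with (z + (w - z))%C at 1 by C_field. apply Cmod_triangle. Qed.

Lemma Cmod_minus_sym (z w : C) : Cmod (z - w) = Cmod (w - z).
Proof. replace (z - w)%C with (- (w - z))%C by C_field. apply Cmod_opp. Qed.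

Lemma Cmod_le_2Rmax (x : C) (e : R) :
  Rabs (fst x) <= e -> Rabs (snd x) <= e -> Cmod x <= 2 * e.
Proof.
  intros H1 H2. eapply Rle_trans. apply Cmod_2Rmax.
  assert (Hm : Rmax (Rabs (fst x)) (Rabs (snd x)) <= e) by (apply Rmax_lub; auto).
  assert (H0 := Rle_trans _ _ _ (Rabs_pos (fst x)) (Rmax_l _ (Rabs (snd x)))).
  assert (Hs := sqrt_sqrt 2). assert (Hs0 := sqrt_pos 2). nra.
Qed.

Lemma Cmod_lt_2Rmax (x : C) (e : R) :
  Rabs (fst x) < e -> Rabs (snd x) < e -> Cmod x < 2 * e.
Proof.
  intros H1 H2. eapply Rle_lt_trans. apply Cmod_2Rmax.
  assert (Hm : Rmax (Rabs (fst x)) (Rabs (snd x)) < e) by (apply Rmax_lub_lt; auto).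
  assert (H0 := Rle_trans _ _ _ (Rabs_pos (fst x)) (Rmax_l _ (Rabs (snd x)))).
  assert (Hs := sqrt_sqrt 2). assert (Hs0 := sqrt_pos 2). nra.
Qed.

Lemma Cmod_eq_0_of_small (x : C) : (forall eps, 0 < eps -> Cmod x < eps) -> x = 0%C.
Proof.
  intros H. apply Cmod_eq_0.
  destruct (Rle_lt_or_eq_dec 0 (Cmod x) (Cmod_ge_0 x)) as [Hp | E]; [| auto].
  specialize (H (Cmod x) Hp). lra.
Qed.

(** * Complex differentiability *)

Definition is_C_derive (f : C -> C) (z l : C) : Prop :=
  is_derive (K:=C_AbsRing) (V:=C_NormedModule) f z l.

Lemma locally_C_Cmod (z : C) (P : C -> Prop) :
  @locally (AbsRing_UniformSpace C_AbsRing) z P <->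
  exists del, 0 < del /\ forall w, Cmod (w - z) < del -> P w.
Proof.
  split.
  - intros [eps He]. exists eps. split; [apply cond_pos | exact He].
  - intros [del [Hd H]]. exists (mkposreal _ Hd). exact H.
Qed.

Lemma is_C_derive_Cmod (f : C -> C) (z l : C) :
  is_C_derive f z l <->
  forall eps, 0 < eps -> exists del, 0 < del /\ forall w, Cmod (w - z) < del ->
    Cmod (f w - f z - (w - z) * l) <= eps * Cmod (w - z).
Proof.
  split.
  - intros [_ H] eps He.
    assert (Hz : @is_filter_lim (AbsRing_NormedModule C_AbsRing)
                   (@locally (AbsRing_UniformSpace C_AbsRing) z) z) by (intros P HP; exact HP).
    exact (proj1 (locally_C_Cmod _ _) (H z Hz (mkposreal eps He))).
  - intros H. split; [apply is_linear_scal_l |].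
    intros x Hx.
    assert (E : z = x) by (apply (is_filter_lim_locally_unique (K:=C_AbsRing)
                                    (V:=AbsRing_NormedModule C_AbsRing)); exact Hx).
    subst x. intros eps. apply locally_C_Cmod. exact (H eps (cond_pos eps)).
Qed.

Lemma is_C_derive_AbsRing (f : C -> C) (z l : C) :
  is_C_derive f z l <-> is_derive (K:=C_AbsRing) (V:=AbsRing_NormedModule C_AbsRing) f z l.
Proof. split; intros [_ H]; (split; [apply is_linear_scal_l | exact H]). Qed.

Lemma is_C_derive_ext_loc (f g : C -> C) (z l : C) :
  (exists del, 0 < del /\ forall w, Cmod (w - z) < del -> f w = g w) ->
  is_C_derive f z l -> is_C_derive g z l.
Proof. intros Hl. apply is_derive_ext_loc. apply locally_C_Cmod. exact Hl. Qed.

Lemma is_C_derive_affine (a b z : C) : is_C_derive (fun w => a + b * w)%C z b.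
Proof.
  apply is_C_derive_Cmod. intros eps He. exists 1. split; [lra |]. intros w _.
  replace (a + b * w - (a + b * z) - (w - z) * b)%C with (RtoC 0) by C_field.
  rewrite Cmod_0. generalize (Cmod_ge_0 (w - z)); nra.
Qed.

Lemma is_C_derive_mult (f g : C -> C) (z df dg : C) :
  is_C_derive f z df -> is_C_derive g z dg ->
  is_C_derive (fun w => f w * g w)%C z (df * g z + f z * dg)%C.
Proof.
  rewrite !is_C_derive_AbsRing. intros Hf Hg.
  exact (is_derive_mult f g z df dg Hf Hg Cmult_comm).
Qed.

Lemma is_C_derive_comp (f g : C -> C) (z df dg : C) :
  is_C_derive f (g z) df -> is_C_derive g z dg ->
  is_C_derive (fun w => f (g w)) z (dg * df)%C.
Proof.
  intros Hf Hg. apply is_C_derive_AbsRing in Hg.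
  exact (is_derive_comp f g z df dg Hf Hg).
Qed.

Lemma is_C_derive_scal (a : C) (f : C -> C) (z l : C) :
  is_C_derive f z l -> is_C_derive (fun w => a * f w)%C z (a * l)%C.
Proof.
  intros H.
  assert (Ha := is_C_derive_mult (fun _ => a) f z 0%C l (is_derive_const a z) H).
  replace (a * l)%C with (0 * f z + a * l)%C by C_field. exact Ha.
Qed.

Lemma is_C_derive_Cinv (z : C) : z <> 0%C -> is_C_derive Cinv z (- / (z * z))%C.
Proof.
  intros Hz. apply is_C_derive_Cmod. intros eps He.
  assert (Hm : 0 < Cmod z) by (apply Cmod_gt_0; auto).
  assert (Hm3 : 0 < eps * Cmod z ^ 3 / 2)
    by (apply Rdiv_lt_0_compat; [apply Rmult_lt_0_compat; auto; apply pow_lt; auto | lra]).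
  exists (Rmin (Cmod z / 2) (eps * Cmod z ^ 3 / 2)). split; [apply Rmin_pos; lra |].
  intros w Hw.
  assert (Hw1 : Cmod (w - z) < Cmod z / 2) by (eapply Rlt_le_trans; [exact Hw | apply Rmin_l]).
  assert (Hw2 : Cmod (w - z) < eps * Cmod z ^ 3 / 2)
    by (eapply Rlt_le_trans; [exact Hw | apply Rmin_r]).
  assert (Hwm : Cmod z / 2 <= Cmod w)
    by (generalize (Cmod_le_dist w z); rewrite Cmod_minus_sym; lra).
  assert (Hw0 : w <> 0%C) by (intro E; subst w; rewrite Cmod_0 in Hwm; lra).
  replace (/ w - / z - (w - z) * - / (z * z))%C with ((w - z) * (w - z) * / (w * (z * z)))%C
    by (field; auto).
  rewrite !Cmod_mult, Cmod_inv, !Cmod_mult by (repeat apply Cmult_neq_0; auto).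
  assert (H0 := Cmod_ge_0 (w - z)).
  rewrite Rmult_assoc, (Rmult_comm eps). apply Rmult_le_compat_l; auto.
  apply Rle_trans with (Cmod (w - z) * / (Cmod z / 2 * (Cmod z * Cmod z))).
  - apply Rmult_le_compat_l; auto. apply Rinv_le_contravar; [nra | apply Rmult_le_compat_r; nra].
  - apply Rle_trans with (eps * Cmod z ^ 3 / 2 * / (Cmod z / 2 * (Cmod z * Cmod z))).
    + apply Rmult_le_compat_r; [left; apply Rinv_0_lt_compat; nra | lra].
    + right. field. lra.
Qed.

Definition Ccontinuous (u : C -> C) (z : C) : Prop :=
  forall eps, 0 < eps -> exists del, 0 < del /\
    forall w, Cmod (w - z) < del -> Cmod (u w - u z) < eps.

Lemma is_C_derive_Ccontinuous (u : C -> C) (z l : C) : is_C_derive u z l -> Ccontinuous u z.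
Proof.
  intros H eps He.
  destruct (proj1 (is_C_derive_Cmod u z l) H 1 Rlt_0_1) as [d1 [Hd1 H1]].
  set (K := Cmod l + 2).
  assert (Hl := Cmod_ge_0 l).
  exists (Rmin d1 (eps / K)).
  split; [apply Rmin_pos; [auto | apply Rdiv_lt_0_compat; unfold K; lra] |].
  intros w Hw.
  assert (Hw1 : Cmod (w - z) < d1) by (eapply Rlt_le_trans; [exact Hw | apply Rmin_l]).
  assert (Hw2 : Cmod (w - z) < eps / K) by (eapply Rlt_le_trans; [exact Hw | apply Rmin_r]).
  specialize (H1 w Hw1).
  replace (u w - u z)%C with ((u w - u z - (w - z) * l) + (w - z) * l)%C by C_field.
  eapply Rle_lt_trans; [apply Cmod_triangle |].
  rewrite Cmod_mult.
  assert (Hwz := Cmod_ge_0 (w - z)).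
  assert (Hk : eps / K * K = eps) by (field; unfold K; lra).
  unfold K in *. nra.
Qed.

Lemma Ccontinuous_minus (u1 u2 : C -> C) (z : C) :
  Ccontinuous u1 z -> Ccontinuous u2 z -> Ccontinuous (fun w => u1 w - u2 w)%C z.
Proof.
  intros H1 H2 eps He.
  destruct (H1 (eps / 2)) as [d1 [Hd1 K1]]; [lra |].
  destruct (H2 (eps / 2)) as [d2 [Hd2 K2]]; [lra |].
  exists (Rmin d1 d2). split; [apply Rmin_pos; auto |].
  intros w Hw.
  specialize (K1 w (Rlt_le_trans _ _ _ Hw (Rmin_l _ _))).
  specialize (K2 w (Rlt_le_trans _ _ _ Hw (Rmin_r _ _))).
  replace (u1 w - u2 w - (u1 z - u2 z))%C with ((u1 w - u1 z) + - (u2 w - u2 z))%C by C_field.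
  eapply Rle_lt_trans; [apply Cmod_triangle |]. rewrite Cmod_opp. lra.
Qed.

Lemma Ccontinuous_affine (a b z : C) : Ccontinuous (fun w => a + b * w)%C z.
Proof.
  apply (is_C_derive_Ccontinuous _ _ b), is_C_derive_affine.
Qed.

Lemma Ccontinuous_const (c z : C) : Ccontinuous (fun _ => c) z.
Proof.
  intros eps He. exists 1. split; [lra |]. intros w _.
  replace (c - c)%C with (RtoC 0) by C_field. rewrite Cmod_0. exact He.
Qed.

(** * Integrals along segments *)

Definition CRInt (g : R -> C) (a b : R) : C := RInt (V:=C_R_CompleteNormedModule) g a b.
Definition is_CRInt (g : R -> C) (a b : R) (l : C) : Prop := is_RInt (V:=C_R_NormedModule) g a b l.

Lemma CRInt_correct (g : R -> C) (a b : R) :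
  ex_RInt (V:=C_R_NormedModule) g a b -> is_CRInt g a b (CRInt g a b).
Proof. exact (RInt_correct (V:=C_R_CompleteNormedModule) g a b). Qed.

Lemma CRInt_unique (g : R -> C) (a b : R) (l : C) : is_CRInt g a b l -> CRInt g a b = l.
Proof. exact (is_RInt_unique (V:=C_R_CompleteNormedModule) g a b l). Qed.

Lemma is_CRInt_plus (g h : R -> C) (a b : R) (l1 l2 : C) :
  is_CRInt g a b l1 -> is_CRInt h a b l2 -> is_CRInt (fun s => g s + h s)%C a b (l1 + l2)%C.
Proof. exact (is_RInt_plus (V:=C_R_NormedModule) g h a b l1 l2). Qed.

Lemma is_CRInt_minus (g h : R -> C) (a b : R) (l1 l2 : C) :
  is_CRInt g a b l1 -> is_CRInt h a b l2 -> is_CRInt (fun s => g s - h s)%C a b (l1 - l2)%C.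
Proof. exact (is_RInt_minus (V:=C_R_NormedModule) g h a b l1 l2). Qed.

Lemma is_CRInt_ext_01 (g h : R -> C) (l : C) :
  (forall s, 0 <= s <= 1 -> g s = h s) -> is_CRInt g 0 1 l -> is_CRInt h 0 1 l.
Proof.
  intros E. apply (is_RInt_ext (V:=C_R_NormedModule) g).
  intros x Hx. rewrite Rmin_left, Rmax_right in Hx by lra. apply E. lra.
Qed.

Lemma is_CRInt_01_Cmod_le (g : R -> C) (l : C) (M : R) :
  (forall s, 0 <= s <= 1 -> Cmod (g s) <= M) -> is_CRInt g 0 1 l -> Cmod l <= M.
Proof.
  intros Hb H.
  rewrite Cmod_norm. replace M with ((1 - 0) * M) by ring.
  apply (norm_RInt_le_const (V:=C_R_NormedModule) g 0 1 l M Rle_0_1); auto.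
  intros x Hx. rewrite <- Cmod_norm. apply Hb, Hx.
Qed.

Lemma is_CRInt_const_01 (c : C) : is_CRInt (fun _ => c) 0 1 c.
Proof.
  assert (H := is_RInt_const (V:=C_R_NormedModule) 0 1 c).
  rewrite scal_R_Cmult in H. replace (RtoC (1 - 0) * c)%C with c in H by C_field. exact H.
Qed.

Lemma is_RInt_id_mult_01 (c : R) : is_RInt (fun s => c * s) 0 1 (c / 2).
Proof.
  replace (c / 2) with (minus (c * 1 ^ 2 / 2) (c * 0 ^ 2 / 2))
    by (unfold minus, plus, opp; simpl; field).
  apply (is_RInt_derive (fun s => c * s ^ 2 / 2)).
  - intros x _. auto_derive; auto. field.
  - intros x _. apply continuity_pt_filterlim. reg.
Qed.

Lemma is_CRInt_id_mult_01 (c : C) : is_CRInt (fun s => RtoC s * c)%C 0 1 (c / 2)%C.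
Proof.
  destruct c as [cr ci].
  replace ((cr, ci) / 2)%C with (cr / 2, ci / 2) by C_field.
  apply (is_RInt_fct_extend_pair (U:=R_NormedModule) (V:=R_NormedModule)).
  - apply (is_RInt_ext (fun s => cr * s)); [intros x _; simpl; ring | apply is_RInt_id_mult_01].
  - apply (is_RInt_ext (fun s => ci * s)); [intros x _; simpl; ring | apply is_RInt_id_mult_01].
Qed.

Definition segment (a b : C) (s : R) : C := (a + RtoC s * (b - a))%C.

Definition line_int (u : C -> C) (a b : C) : C :=
  CRInt (fun s => (b - a) * u (segment a b s))%C 0 1.

Definition Ccontinuous_on_segment (u : C -> C) (a b : C) : Prop :=
  forall s, 0 <= s <= 1 -> Ccontinuous u (segment a b s).

Definition Ccontinuous_on_disc (u : C -> C) : Prop :=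
  forall w, Cmod w < 1 -> Ccontinuous u w.

Lemma segment_0 (a b : C) : segment a b 0 = a.
Proof. unfold segment. C_field. Qed.

Lemma segment_1 (a b : C) : segment a b 1 = b.
Proof. unfold segment. C_field. Qed.

Lemma segment_Cmod_le (a b : C) (s rho : R) :
  Cmod a <= rho -> Cmod b <= rho -> 0 <= s <= 1 -> Cmod (segment a b s) <= rho.
Proof.
  intros Ha Hb Hs.
  replace (segment a b s) with (RtoC (1 - s) * a + RtoC s * b)%C by (unfold segment; C_field).
  eapply Rle_trans; [apply Cmod_triangle |].
  rewrite !Cmod_RtoC_mult, !Rabs_pos_eq by lra. nra.
Qed.

Lemma Ccontinuous_on_segment_in_ball (u : C -> C) (a b : C) (rho : R) :
  rho < 1 -> Ccontinuous_on_disc u -> Cmod a <= rho -> Cmod b <= rho ->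
  Ccontinuous_on_segment u a b.
Proof.
  intros Hr Hc Ha Hb s Hs. apply Hc.
  generalize (segment_Cmod_le a b s rho Ha Hb Hs). lra.
Qed.

Lemma line_integrand_continuous (u : C -> C) (a b : C) (s : R) :
  Ccontinuous u (segment a b s) ->
  continuous (T:=R_UniformSpace) (U:=C_R_NormedModule) (fun s => (b - a) * u (segment a b s))%C s.
Proof.
  intros H. apply filterlim_locally. intros eps.
  set (K := Cmod (b - a) + 1).
  assert (HK : 0 < K) by (unfold K; generalize (Cmod_ge_0 (b - a)); lra).
  assert (HeK : 0 < eps / K) by (apply Rdiv_lt_0_compat; [apply cond_pos | auto]).
  destruct (H (eps / K) HeK) as [del [Hd Hw]].
  exists (mkposreal (del / K) (Rdiv_lt_0_compat _ _ Hd HK)). intros s' Hs'.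
  apply (norm_compat1 (K:=R_AbsRing) (V:=C_R_NormedModule)).
  rewrite <- Cmod_norm.
  change (Cmod ((b - a) * u (segment a b s') - (b - a) * u (segment a b s)) < eps).
  replace ((b - a) * u (segment a b s') - (b - a) * u (segment a b s))%C
    with ((b - a) * (u (segment a b s') - u (segment a b s)))%C by C_field.
  rewrite Cmod_mult.
  assert (Hc : Cmod (u (segment a b s') - u (segment a b s)) < eps / K).
  { apply Hw.
    replace (segment a b s' - segment a b s)%C with (RtoC (s' - s) * (b - a))%C
      by (unfold segment; C_field).
    rewrite Cmod_RtoC_mult.
    change (Rabs (s' - s) < del / K) in Hs'.
    assert (Hab := Cmod_ge_0 (b - a)).
    assert (E : del / K * K = del) by (field; lra).
    unfold K in *. nra. }
  assert (E : K * (eps / K) = eps) by (field; lra).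
  assert (Hab := Cmod_ge_0 (b - a)).
  unfold K in *. nra.
Qed.

Lemma ex_line_integrand (u : C -> C) (a b : C) (c d : R) :
  Ccontinuous_on_segment u a b -> 0 <= c <= 1 -> 0 <= d <= 1 ->
  ex_RInt (V:=C_R_NormedModule) (fun s => (b - a) * u (segment a b s))%C c d.
Proof.
  intros H Hc Hd. apply (ex_RInt_continuous (V:=C_R_CompleteNormedModule)).
  intros s Hs. apply line_integrand_continuous, H.
  split; [apply Rle_trans with (Rmin c d); [apply Rmin_glb |]
        | apply Rle_trans with (Rmax c d); [| apply Rmax_lub]]; lra.
Qed.

Lemma is_line_int (u : C -> C) (a b : C) :
  Ccontinuous_on_segment u a b ->
  is_CRInt (fun s => (b - a) * u (segment a b s))%C 0 1 (line_int u a b).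
Proof. intros H. apply CRInt_correct, ex_line_integrand; auto; lra. Qed.

Lemma line_int_Cmod_le (u : C -> C) (a b : C) (M : R) :
  Ccontinuous_on_segment u a b ->
  (forall s, 0 <= s <= 1 -> Cmod (u (segment a b s)) <= M) ->
  Cmod (line_int u a b) <= Cmod (b - a) * M.
Proof.
  intros H Hb. apply (is_CRInt_01_Cmod_le (fun s => (b - a) * u (segment a b s))%C).
  - intros s Hs. rewrite Cmod_mult. apply Rmult_le_compat_l; [apply Cmod_ge_0 | apply Hb, Hs].
  - apply is_line_int, H.
Qed.

Lemma line_int_minus (u1 u2 : C -> C) (a b : C) :
  Ccontinuous_on_segment u1 a b -> Ccontinuous_on_segment u2 a b ->
  line_int (fun w => u1 w - u2 w)%C a b = (line_int u1 a b - line_int u2 a b)%C.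
Proof.
  intros H1 H2. apply CRInt_unique.
  eapply is_CRInt_ext_01;
    [| apply (is_CRInt_minus _ _ _ _ _ _ (is_line_int _ _ _ H1) (is_line_int _ _ _ H2))].
  intros s _. simpl. C_field.
Qed.

Lemma line_int_affine (a0 a1 a b : C) :
  line_int (fun w => a0 + a1 * w)%C a b = (a0 * (b - a) + a1 * (b * b - a * a) / 2)%C.
Proof.
  apply CRInt_unique.
  replace (a0 * (b - a) + a1 * (b * b - a * a) / 2)%C
    with ((b - a) * (a0 + a1 * a) + a1 * (b - a) * (b - a) / 2)%C by C_field.
  eapply is_CRInt_ext_01;
    [| apply (is_CRInt_plus _ _ _ _ _ _ (is_CRInt_const_01 ((b - a) * (a0 + a1 * a))%C)
                                       (is_CRInt_id_mult_01 (a1 * (b - a) * (b - a))%C))].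
  intros s _. unfold segment. C_field.
Qed.

Lemma line_int_subsegment (u : C -> C) (a b : C) (c d : R) :
  Ccontinuous_on_segment u a b -> 0 <= c <= 1 -> 0 <= d <= 1 ->
  line_int u (segment a b c) (segment a b d) =
  CRInt (fun s => (b - a) * u (segment a b s))%C c d.
Proof.
  intros H Hc Hd. apply CRInt_unique.
  set (g := fun s => ((b - a) * u (segment a b s))%C).
  assert (Hs : is_RInt (V:=C_R_NormedModule) g ((d - c) * 0 + c) ((d - c) * 1 + c) (CRInt g c d)).
  { replace ((d - c) * 0 + c) with c by ring. replace ((d - c) * 1 + c) with d by ring.
    apply CRInt_correct, ex_line_integrand; auto. }
  apply (is_RInt_comp_lin (V:=C_R_NormedModule)) in Hs.
  eapply is_CRInt_ext_01; [| exact Hs].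
  intros s _. unfold g. rewrite scal_R_Cmult.
  replace (segment a b ((d - c) * s + c)) with (segment (segment a b c) (segment a b d) s)
    by (unfold segment; C_field).
  generalize (u (segment (segment a b c) (segment a b d) s)). intros x. unfold segment. C_field.
Qed.

Lemma line_int_swap (u : C -> C) (a b : C) :
  Ccontinuous_on_segment u a b -> line_int u b a = (- line_int u a b)%C.
Proof.
  intros H.
  replace (line_int u b a) with (line_int u (segment a b 1) (segment a b 0))
    by (rewrite segment_0, segment_1; reflexivity).
  rewrite line_int_subsegment by (auto; lra).
  apply CRInt_unique. apply (is_RInt_swap (V:=C_R_NormedModule)), is_line_int, H.
Qed.

Lemma line_int_midpoint (u : C -> C) (a b : C) :
  Ccontinuous_on_segment u a b ->
  line_int u a b = (line_int u a ((a + b) / 2) + line_int u ((a + b) / 2) b)%C.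
Proof.
  intros H.
  replace ((a + b) / 2)%C with (segment a b (1 / 2)) by (unfold segment; C_field).
  assert (E1 := line_int_subsegment u a b 0 (1 / 2) H ltac:(lra) ltac:(lra)).
  assert (E2 := line_int_subsegment u a b (1 / 2) 1 H ltac:(lra) ltac:(lra)).
  rewrite segment_0 in E1. rewrite segment_1 in E2. rewrite E1, E2.
  unfold line_int, CRInt. symmetry.
  apply (RInt_Chasles (V:=C_R_CompleteNormedModule)); apply ex_line_integrand; auto; lra.
Qed.

(** * Goursat's theorem *)

Lemma half_pow_small (P e : R) : 0 < e -> exists n, P * (/ 2) ^ n < e.
Proof.
  intros He.
  assert (HP := Rabs_pos P).
  destruct (pow_lt_1_zero (/ 2)) with (y := e / (Rabs P + 1)) as [N HN];
    [rewrite Rabs_pos_eq; lra | apply Rdiv_lt_0_compat; lra |].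
  exists N. specialize (HN N (le_n N)).
  assert (H0 : 0 <= (/ 2) ^ N) by (apply pow_le; lra).
  rewrite Rabs_pos_eq in HN by exact H0.
  assert (E : e / (Rabs P + 1) * (Rabs P + 1) = e) by (field; lra).
  assert (HPa := Rle_abs P). nra.
Qed.

Lemma R_cauchy_limit (x e : nat -> R) :
  (forall n m, (n <= m)%nat -> Rabs (x m - x n) <= e n) ->
  (forall eps, 0 < eps -> exists N, e N < eps) ->
  exists L, forall n, Rabs (L - x n) <= e n.
Proof.
  intros H He.
  assert (Hc : ex_lim_seq_cauchy x).
  { intros eps. destruct (He (eps / 2)) as [N HN]; [generalize (cond_pos eps); lra |].
    exists N. intros n m Hn Hm.
    replace (x n - x m) with ((x n - x N) - (x m - x N)) by ring.
    eapply Rle_lt_trans; [apply Rabs_triang |]. rewrite Rabs_Ropp.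
    generalize (H N n Hn) (H N m Hm). lra. }
  apply ex_lim_seq_cauchy_corr in Hc. destruct Hc as [L Hl].
  exists L. intros n.
  assert (Hb : forall m, (n <= m)%nat -> x n - e n <= x m <= x n + e n)
    by (intros m Hm; generalize (H n m Hm); intros Hnm; apply Rabs_le_between in Hnm; lra).
  assert (Hup : Rbar_le L (x n + e n)).
  { apply (is_lim_seq_le_loc x (fun _ => x n + e n) _ _); [| exact Hl | apply is_lim_seq_const].
    exists n. intros m Hm. apply Hb, Hm. }
  assert (Hlo : Rbar_le (x n - e n) L).
  { apply (is_lim_seq_le_loc (fun _ => x n - e n) x _ _); [| apply is_lim_seq_const | exact Hl].
    exists n. intros m Hm. apply Hb, Hm. }
  simpl in *. apply Rabs_le_between. lra.
Qed.

Lemma C_cauchy_limit (x : nat -> C) (e : nat -> R) :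
  (forall n m, (n <= m)%nat -> Cmod (x m - x n) <= e n) ->
  (forall eps, 0 < eps -> exists N, e N < eps) ->
  exists L, forall n, Cmod (L - x n) <= 2 * e n.
Proof.
  intros H He.
  assert (Hfst : forall z : C, Rabs (fst z) <= Cmod z)
    by (intros z; eapply Rle_trans; [apply Rmax_l | apply Rmax_Cmod]).
  assert (Hsnd : forall z : C, Rabs (snd z) <= Cmod z)
    by (intros z; eapply Rle_trans; [apply Rmax_r | apply Rmax_Cmod]).
  destruct (R_cauchy_limit (fun n => fst (x n)) e) as [Lx HLx]; auto.
  { intros n m Hnm. eapply Rle_trans; [| apply (H n m Hnm)]. apply (Hfst (x m - x n)%C). }
  destruct (R_cauchy_limit (fun n => snd (x n)) e) as [Ly HLy]; auto.
  { intros n m Hnm. eapply Rle_trans; [| apply (H n m Hnm)]. apply (Hsnd (x m - x n)%C). }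
  exists (Lx, Ly). intros n. apply Cmod_le_2Rmax; [apply HLx | apply HLy].
Qed.

Definition C_differentiable_on_disc (u : C -> C) : Prop :=
  forall w, Cmod w < 1 -> exists l, is_C_derive u w l.

Lemma C_differentiable_on_disc_continuous (u : C -> C) :
  C_differentiable_on_disc u -> Ccontinuous_on_disc u.
Proof.
  intros H w Hw. destruct (H w Hw) as [l Hl]. exact (is_C_derive_Ccontinuous u w l Hl).
Qed.

Definition Ctriangle : Type := (C * C * C)%type.

Definition tri_int (u : C -> C) (T : Ctriangle) : C :=
  let '(a, b, c) := T in (line_int u a b + line_int u b c + line_int u c a)%C.

Definition perimeter (T : Ctriangle) : R :=
  let '(a, b, c) := T in Cmod (b - a) + Cmod (c - b) + Cmod (a - c).

Definition tri_in_ball (rho : R) (T : Ctriangle) : Prop :=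
  let '(a, b, c) := T in Cmod a <= rho /\ Cmod b <= rho /\ Cmod c <= rho.

Definition tri_vertex (T : Ctriangle) : C := let '(a, _, _) := T in a.

(* The midpoint subdivision, oriented so that the inner edges cancel in
   [tri_int_subdivision]. *)
Definition subtri1 (T : Ctriangle) : Ctriangle :=
  let '(a, b, c) := T in (a, (a + b) / 2, (c + a) / 2)%C.
Definition subtri2 (T : Ctriangle) : Ctriangle :=
  let '(a, b, c) := T in ((a + b) / 2, b, (b + c) / 2)%C.
Definition subtri3 (T : Ctriangle) : Ctriangle :=
  let '(a, b, c) := T in ((c + a) / 2, (b + c) / 2, c)%C.
Definition subtri4 (T : Ctriangle) : Ctriangle :=
  let '(a, b, c) := T in ((a + b) / 2, (b + c) / 2, (c + a) / 2)%C.

Definition larger_tri (u : C -> C) (T1 T2 : Ctriangle) : Ctriangle :=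
  if Rle_dec (Cmod (tri_int u T2)) (Cmod (tri_int u T1)) then T1 else T2.

Definition goursat_step (u : C -> C) (T : Ctriangle) : Ctriangle :=
  larger_tri u (larger_tri u (subtri1 T) (subtri2 T)) (larger_tri u (subtri3 T) (subtri4 T)).

Lemma perimeter_ge_0 (T : Ctriangle) : 0 <= perimeter T.
Proof.
  destruct T as [[a b] c]. simpl.
  generalize (Cmod_ge_0 (b - a)) (Cmod_ge_0 (c - b)) (Cmod_ge_0 (a - c)). lra.
Qed.

Lemma midpoint_Cmod_le (a b : C) (rho : R) :
  Cmod a <= rho -> Cmod b <= rho -> Cmod ((a + b) / 2) <= rho.
Proof.
  intros Ha Hb. replace ((a + b) / 2)%C with (segment a b (1 / 2)) by (unfold segment; C_field).
  apply segment_Cmod_le; auto; lra.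
Qed.

Lemma Cmod_half (x y : C) : x = (y * RtoC (/ 2))%C -> Cmod x = Cmod y / 2.
Proof. intros ->. rewrite Cmod_mult, Cmod_R, Rabs_pos_eq by lra. reflexivity. Qed.

Lemma larger_tri_cases (u : C -> C) (T1 T2 : Ctriangle) :
  (larger_tri u T1 T2 = T1 \/ larger_tri u T1 T2 = T2) /\
  Cmod (tri_int u T1) <= Cmod (tri_int u (larger_tri u T1 T2)) /\
  Cmod (tri_int u T2) <= Cmod (tri_int u (larger_tri u T1 T2)).
Proof. unfold larger_tri. destruct (Rle_dec _ _); repeat split; auto; lra. Qed.

Lemma goursat_step_cases (u : C -> C) (P : Ctriangle -> Prop) (T : Ctriangle) :
  P (subtri1 T) -> P (subtri2 T) -> P (subtri3 T) -> P (subtri4 T) -> P (goursat_step u T).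
Proof.
  intros H1 H2 H3 H4. unfold goursat_step.
  destruct (larger_tri_cases u (subtri1 T) (subtri2 T)) as [[-> | ->] _];
  destruct (larger_tri_cases u (subtri3 T) (subtri4 T)) as [[-> | ->] _];
  match goal with |- P (larger_tri u ?X ?Y) =>
    destruct (larger_tri_cases u X Y) as [[-> | ->] _] end; auto.
Qed.

Lemma goursat_step_in_ball (u : C -> C) (rho : R) (T : Ctriangle) :
  tri_in_ball rho T -> tri_in_ball rho (goursat_step u T).
Proof.
  destruct T as [[a b] c]. simpl. intros [Ha [Hb Hc]].
  assert (H1 := midpoint_Cmod_le a b rho Ha Hb). assert (H2 := midpoint_Cmod_le b c rho Hb Hc).
  assert (H3 := midpoint_Cmod_le c a rho Hc Ha).
  apply goursat_step_cases; simpl; tauto.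
Qed.

Lemma goursat_step_perimeter (u : C -> C) (T : Ctriangle) :
  perimeter (goursat_step u T) = perimeter T / 2.
Proof.
  destruct T as [[a b] c].
  assert (Hab : Cmod (a - b) = Cmod (b - a)) by apply Cmod_minus_sym.
  assert (Hbc : Cmod (b - c) = Cmod (c - b)) by apply Cmod_minus_sym.
  assert (Hca : Cmod (c - a) = Cmod (a - c)) by apply Cmod_minus_sym.
  apply goursat_step_cases; simpl;
  repeat match goal with |- context [Cmod ?x] =>
    first [ rewrite (Cmod_half x (b - a)) by C_field | rewrite (Cmod_half x (c - b)) by C_field
          | rewrite (Cmod_half x (a - c)) by C_field | rewrite (Cmod_half x (a - b)) by C_field
          | rewrite (Cmod_half x (b - c)) by C_field | rewrite (Cmod_half x (c - a)) by C_field ]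
  end; rewrite ?Hab, ?Hbc, ?Hca; field.
Qed.

Lemma goursat_step_vertex (u : C -> C) (T : Ctriangle) :
  Cmod (tri_vertex (goursat_step u T) - tri_vertex T) <= perimeter T.
Proof.
  assert (Hp := perimeter_ge_0 T).
  destruct T as [[a b] c]. simpl in *.
  assert (Hp1 := Cmod_ge_0 (b - a)). assert (Hp2 := Cmod_ge_0 (c - b)).
  assert (Hp3 := Cmod_ge_0 (a - c)).
  apply goursat_step_cases; simpl.
  - replace (a - a)%C with (RtoC 0) by C_field. rewrite Cmod_0. lra.
  - rewrite (Cmod_half _ (b - a)) by C_field. lra.
  - rewrite (Cmod_half _ (- (a - c))) by C_field. rewrite Cmod_opp. lra.
  - rewrite (Cmod_half _ (b - a)) by C_field. lra.
Qed.

Lemma tri_edges_near_vertex (T : Ctriangle) (s : R) : 0 <= s <= 1 ->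
  let '(a, b, c) := T in
  Cmod (segment a b s - a) <= perimeter T /\ Cmod (segment b c s - a) <= perimeter T /\
  Cmod (segment c a s - a) <= perimeter T.
Proof.
  intros Hs. destruct T as [[a b] c]. simpl.
  assert (Hp1 := Cmod_ge_0 (b - a)). assert (Hp2 := Cmod_ge_0 (c - b)).
  assert (Hp3 := Cmod_ge_0 (a - c)).
  unfold segment. repeat split.
  - replace (a + RtoC s * (b - a) - a)%C with (RtoC s * (b - a))%C by C_field.
    rewrite Cmod_RtoC_mult, Rabs_pos_eq by lra. nra.
  - replace (b + RtoC s * (c - b) - a)%C with ((b - a) + RtoC s * (c - b))%C by C_field.
    eapply Rle_trans; [apply Cmod_triangle |]. rewrite Cmod_RtoC_mult, Rabs_pos_eq by lra. nra.
  - replace (c + RtoC s * (a - c) - a)%C with (RtoC (1 - s) * (- (a - c)))%C by C_field.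
    rewrite Cmod_RtoC_mult, Rabs_pos_eq, Cmod_opp by lra. nra.
Qed.

Lemma tri_int_affine (a0 a1 : C) (T : Ctriangle) : tri_int (fun w => a0 + a1 * w)%C T = 0%C.
Proof. destruct T as [[a b] c]. simpl. rewrite !line_int_affine. C_field. Qed.

Lemma tri_int_Cmod_le (u : C -> C) (rho M : R) (T : Ctriangle) :
  rho < 1 -> Ccontinuous_on_disc u -> tri_in_ball rho T ->
  (forall w, Cmod (w - tri_vertex T) <= perimeter T -> Cmod (u w) <= M) ->
  Cmod (tri_int u T) <= perimeter T * M.
Proof.
  intros Hrho Hu HT HM.
  assert (Hedges := tri_edges_near_vertex T).
  destruct T as [[a b] c]. simpl in *. destruct HT as [Ha [Hb Hc]].
  assert (E : forall p q, Cmod p <= rho -> Cmod q <= rho ->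
            (forall s, 0 <= s <= 1 -> Cmod (segment p q s - a) <= perimeter (a, b, c)) ->
            Cmod (line_int u p q) <= Cmod (q - p) * M).
  { intros p q Hp Hq Hpq. apply line_int_Cmod_le;
      [eapply Ccontinuous_on_segment_in_ball; eauto | intros s Hs; apply HM, Hpq, Hs]. }
  assert (E1 := E a b Ha Hb (fun s Hs => proj1 (Hedges s Hs))).
  assert (E2 := E b c Hb Hc (fun s Hs => proj1 (proj2 (Hedges s Hs)))).
  assert (E3 := E c a Hc Ha (fun s Hs => proj2 (proj2 (Hedges s Hs)))).
  assert (S1 := Cmod_triangle (line_int u a b) (line_int u b c)).
  assert (S2 := Cmod_triangle (line_int u a b + line_int u b c) (line_int u c a)).
  simpl. lra.
Qed.

Section TriangleIntegrals.

Variables (u : C -> C) (rho : R).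
Hypotheses (Hrho : rho < 1) (Hu : Ccontinuous_on_disc u).

Lemma tri_int_subdivision (T : Ctriangle) : tri_in_ball rho T ->
  tri_int u T = (tri_int u (subtri1 T) + tri_int u (subtri2 T) +
                 tri_int u (subtri3 T) + tri_int u (subtri4 T))%C.
Proof.
  destruct T as [[a b] c]. simpl. intros [Ha [Hb Hc]].
  assert (H1 := midpoint_Cmod_le a b rho Ha Hb). assert (H2 := midpoint_Cmod_le b c rho Hb Hc).
  assert (H3 := midpoint_Cmod_le c a rho Hc Ha).
  rewrite (line_int_midpoint u a b), (line_int_midpoint u b c), (line_int_midpoint u c a),
    (line_int_swap u ((c + a) / 2) ((a + b) / 2)), (line_int_swap u ((a + b) / 2) ((b + c) / 2)),
    (line_int_swap u ((b + c) / 2) ((c + a) / 2))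
    by (eapply Ccontinuous_on_segment_in_ball; eauto).
  C_field.
Qed.

Lemma goursat_step_tri_int (T : Ctriangle) : tri_in_ball rho T ->
  Cmod (tri_int u T) <= 4 * Cmod (tri_int u (goursat_step u T)).
Proof.
  intros HT. rewrite (tri_int_subdivision T HT). unfold goursat_step.
  destruct (larger_tri_cases u (subtri1 T) (subtri2 T)) as [_ [A1 A2]].
  destruct (larger_tri_cases u (subtri3 T) (subtri4 T)) as [_ [A3 A4]].
  destruct (larger_tri_cases u (larger_tri u (subtri1 T) (subtri2 T))
                              (larger_tri u (subtri3 T) (subtri4 T))) as [_ [B1 B2]].
  set (x1 := tri_int u (subtri1 T)) in *. set (x2 := tri_int u (subtri2 T)) in *.
  set (x3 := tri_int u (subtri3 T)) in *. set (x4 := tri_int u (subtri4 T)) in *.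
  assert (S3 := Cmod_triangle (x1 + x2) x3). assert (S2 := Cmod_triangle x1 x2).
  assert (S4 := Cmod_triangle (x1 + x2 + x3) x4).
  lra.
Qed.

Lemma tri_int_local_bound (T : Ctriangle) (z l : C) (eps r : R) :
  0 <= eps -> tri_in_ball rho T ->
  (forall w, Cmod (w - z) <= r -> Cmod (u w - u z - (w - z) * l) <= eps * Cmod (w - z)) ->
  Cmod (tri_vertex T - z) + perimeter T <= r ->
  Cmod (tri_int u T) <= perimeter T * (eps * r).
Proof.
  intros Heps HT Hl Hr.
  (* affine functions have vanishing triangle integrals, so only the remainder counts *)
  set (aff := fun w => (u z - z * l + l * w)%C).
  set (rem := fun w => (u w - aff w)%C).
  assert (Hrem : Ccontinuous_on_disc rem)
    by (intros w Hw; apply Ccontinuous_minus; [apply Hu, Hw | apply Ccontinuous_affine]).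
  assert (E : tri_int u T = tri_int rem T).
  { replace (tri_int rem T) with (tri_int rem T + tri_int aff T)%C
      by (unfold aff; rewrite tri_int_affine; C_field).
    destruct T as [[a b] c]. simpl in HT |- *. destruct HT as [Ha [Hb Hc]].
    unfold rem.
    rewrite !line_int_minus by (eapply Ccontinuous_on_segment_in_ball; eauto;
                                intros w _; apply Ccontinuous_affine).
    C_field. }
  rewrite E. apply (tri_int_Cmod_le rem rho); auto.
  intros w Hw.
  assert (Hwz : Cmod (w - z) <= r).
  { replace (w - z)%C with ((w - tri_vertex T) + (tri_vertex T - z))%C by C_field.
    eapply Rle_trans; [apply Cmod_triangle | lra]. }
  replace (rem w) with (u w - u z - (w - z) * l)%C by (unfold rem, aff; C_field).
  eapply Rle_trans; [apply Hl, Hwz |].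
  apply Rmult_le_compat_l; lra.
Qed.

End TriangleIntegrals.

Section Goursat.

Variables (u : C -> C) (rho : R) (T0 : Ctriangle).
Hypotheses (Hrho : rho < 1) (Hu : C_differentiable_on_disc u) (HT0 : tri_in_ball rho T0).

Let nested (n : nat) : Ctriangle := Nat.iter n (goursat_step u) T0.

Lemma nested_in_ball (n : nat) : tri_in_ball rho (nested n).
Proof. induction n; [exact HT0 | apply goursat_step_in_ball, IHn]. Qed.

Lemma nested_perimeter (n : nat) : perimeter (nested n) = perimeter T0 * (/ 2) ^ n.
Proof.
  induction n; [simpl; ring |].
  simpl. fold (nested n). rewrite goursat_step_perimeter, IHn. field.
Qed.

Lemma nested_tri_int (n : nat) : Cmod (tri_int u T0) <= 4 ^ n * Cmod (tri_int u (nested n)).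
Proof.
  induction n; [simpl; lra |].
  simpl. fold (nested n).
  assert (H := goursat_step_tri_int u rho Hrho (C_differentiable_on_disc_continuous u Hu)
                 (nested n) (nested_in_ball n)).
  assert (0 <= 4 ^ n) by (apply pow_le; lra). nra.
Qed.

Lemma nested_vertex_cauchy (n m : nat) : (n <= m)%nat ->
  Cmod (tri_vertex (nested m) - tri_vertex (nested n)) <= 2 * perimeter T0 * (/ 2) ^ n.
Proof.
  intros Hnm. replace m with (n + (m - n))%nat by lia.
  assert (Hk : forall k, Cmod (tri_vertex (nested (n + k)) - tri_vertex (nested n)) <=
                         2 * perimeter T0 * (/ 2) ^ n - 2 * perimeter T0 * (/ 2) ^ (n + k)).
  { induction k.
    - rewrite Nat.add_0_r. replace (tri_vertex (nested n) - tri_vertex (nested n))%C with (RtoC 0)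
        by C_field. rewrite Cmod_0. lra.
    - rewrite Nat.add_succ_r.
      assert (H := goursat_step_vertex u (nested (n + k))).
      change (nested (S (n + k))) with (goursat_step u (nested (n + k))).
      rewrite nested_perimeter in H.
      replace (tri_vertex (goursat_step u (nested (n + k))) - tri_vertex (nested n))%C
        with ((tri_vertex (goursat_step u (nested (n + k))) - tri_vertex (nested (n + k))) +
              (tri_vertex (nested (n + k)) - tri_vertex (nested n)))%C by C_field.
      eapply Rle_trans; [apply Cmod_triangle |].
      change ((/ 2) ^ S (n + k)) with (/ 2 * (/ 2) ^ (n + k)). lra. }
  eapply Rle_trans; [apply Hk |].
  assert (0 <= perimeter T0 * (/ 2) ^ (n + (m - n)))
    by (apply Rmult_le_pos; [apply perimeter_ge_0 | apply pow_le; lra]).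
  lra.
Qed.

Lemma nested_vertex_limit : exists z, Cmod z < 1 /\
  forall n, Cmod (z - tri_vertex (nested n)) <= 4 * perimeter T0 * (/ 2) ^ n.
Proof.
  destruct (C_cauchy_limit (fun n => tri_vertex (nested n))
              (fun n => 2 * perimeter T0 * (/ 2) ^ n)) as [z Hz].
  - exact nested_vertex_cauchy.
  - intros eps He. apply half_pow_small, He.
  - exists z. split; [| intros n; specialize (Hz n); lra].
    destruct (half_pow_small (4 * perimeter T0) (1 - rho)) as [n Hn]; [lra |].
    assert (Ha : Cmod (tri_vertex (nested n)) <= rho)
      by (generalize (nested_in_ball n); destruct (nested n) as [[a b] c]; simpl; tauto).
    generalize (Cmod_le_dist (tri_vertex (nested n)) z) (Hz n). lra.
Qed.

Theorem goursat : tri_int u T0 = 0%C.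
Proof.
  destruct nested_vertex_limit as [z [Hz Hlim]].
  destruct (Hu z Hz) as [l Hl].
  set (P := perimeter T0).
  assert (HP : 0 <= P) by apply perimeter_ge_0.
  apply Cmod_eq_0_of_small. intros e He.
  set (eps := e / (5 * P ^ 2 + 1)).
  assert (Heps : 0 < eps) by (unfold eps; apply Rdiv_lt_0_compat; nra).
  destruct (proj1 (is_C_derive_Cmod u z l) Hl eps Heps) as [del [Hdel Hder]].
  destruct (half_pow_small (5 * P) del Hdel) as [n Hn].
  set (q := (/ 2) ^ n) in *.
  assert (Hq : 0 <= q) by (apply pow_le; lra).
  assert (Hb : Cmod (tri_int u (nested n)) <= P * q * (eps * (5 * P * q))).
  { replace (P * q) with (perimeter (nested n)) by (rewrite nested_perimeter; reflexivity).
    apply (tri_int_local_bound u rho Hrho (C_differentiable_on_disc_continuous u Hu) _ z l);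
      [lra | apply nested_in_ball | intros w Hw; apply Hder; lra |].
    rewrite Cmod_minus_sym, nested_perimeter. specialize (Hlim n). fold P q in Hlim |- *. lra. }
  assert (H4 : 4 ^ n * (q * q) = 1)
    by (unfold q; rewrite <- !Rpow_mult_distr; replace (4 * (/ 2 * / 2)) with 1 by field;
        apply pow1).
  assert (H4n : 0 <= 4 ^ n) by (apply pow_le; lra).
  assert (Ee : eps * (5 * P ^ 2 + 1) = e) by (unfold eps; field; nra).
  (* |int_T0 u| <= 4^n |int_Tn u| <= 4^n (P q) (eps 5 P q) = 5 eps P^2, with q = 2^-n *)
  eapply Rle_lt_trans; [apply (nested_tri_int n) |].
  apply Rle_lt_trans with (4 ^ n * (P * q * (eps * (5 * P * q))));
    [apply Rmult_le_compat_l; auto |].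
  replace (4 ^ n * (P * q * (eps * (5 * P * q)))) with (4 ^ n * (q * q) * (5 * eps * P ^ 2))
    by ring.
  rewrite H4. nra.
Qed.

End Goursat.

(** * The Cesàro operator *)

Lemma line_int_const (c a b : C) : line_int (fun _ => c) a b = (c * (b - a))%C.
Proof.
  transitivity (line_int (fun w => c + 0 * w)%C a b).
  - unfold line_int, CRInt. f_equal. apply functional_extensionality. intros s. C_field.
  - rewrite line_int_affine. C_field.
Qed.

Lemma line_int_from_0_increment (u : C -> C) (z w : C) :
  C_differentiable_on_disc u -> Cmod z < 1 -> Cmod w < 1 ->
  (line_int u 0 w - line_int u 0 z)%C = line_int u z w.
Proof.
  intros Hu Hz Hw.
  set (rho := Rmax (Cmod z) (Cmod w)).
  assert (Hr : rho < 1) by (apply Rmax_lub_lt; auto).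
  assert (Hc := C_differentiable_on_disc_continuous u Hu).
  assert (H0 : Cmod 0 <= rho)
    by (rewrite Cmod_0; eapply Rle_trans; [apply Cmod_ge_0 | apply Rmax_l]).
  assert (HG := goursat u rho (RtoC 0, z, w) Hr Hu (conj H0 (conj (Rmax_l _ _) (Rmax_r _ _)))).
  simpl in HG.
  rewrite (line_int_swap u 0 w) in HG
    by (apply (Ccontinuous_on_segment_in_ball u 0 w rho); auto; apply Rmax_r).
  replace (line_int u z w)
    with ((line_int u 0 z + line_int u z w + - line_int u 0 w) +
          (line_int u 0 w - line_int u 0 z))%C
    by C_field.
  rewrite HG. C_field.
Qed.

Lemma is_C_derive_line_int_from_0 (u : C -> C) (z : C) :
  C_differentiable_on_disc u -> Cmod z < 1 -> is_C_derive (fun w => line_int u 0 w) z (u z).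
Proof.
  intros Hu Hz.
  assert (Hc := C_differentiable_on_disc_continuous u Hu).
  apply is_C_derive_Cmod. intros eps He.
  destruct (Hc z Hz eps He) as [dc [Hdc Hcc]].
  exists (Rmin dc (1 - Cmod z)). split; [apply Rmin_pos; lra |].
  intros w Hw.
  assert (Hw1 : Cmod (w - z) < dc) by (eapply Rlt_le_trans; [exact Hw | apply Rmin_l]).
  assert (Hw2 : Cmod (w - z) < 1 - Cmod z) by (eapply Rlt_le_trans; [exact Hw | apply Rmin_r]).
  assert (Hwm : Cmod w < 1) by (generalize (Cmod_le_dist z w); lra).
  assert (Hseg : Ccontinuous_on_segment u z w)
    by (apply (Ccontinuous_on_segment_in_ball u z w (Rmax (Cmod z) (Cmod w)));
        auto; [apply Rmax_lub_lt | apply Rmax_l | apply Rmax_r]; auto).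
  rewrite line_int_from_0_increment by auto.
  replace (line_int u z w - (w - z) * u z)%C with (line_int (fun x => u x - u z) z w)%C
    by (rewrite line_int_minus, line_int_const by (auto; intros s _ ; apply Ccontinuous_const);
        C_field).
  rewrite Rmult_comm. apply line_int_Cmod_le.
  - intros s Hs. apply Ccontinuous_minus; [apply Hseg, Hs | apply Ccontinuous_const].
  - intros s Hs. apply Rlt_le, Hcc.
    replace (segment z w s - z)%C with (RtoC s * (w - z))%C by (unfold segment; C_field).
    generalize (Cmod_RtoC_mult_le s (w - z) Hs). lra.
Qed.

Lemma holD_minus (g h : C -> C) : holD g -> holD h -> holD (fun w => g w - h w)%C.
Proof.
  intros [Hg Hg0] [Hh Hh0]. split.
  - intros z Hz. destruct (Hg z Hz) as [lg Hlg]. destruct (Hh z Hz) as [lh Hlh].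
    exists (lg - lh)%C. exact (is_derive_minus g h z lg lh Hlg Hlh).
  - intros z Hz. rewrite Hg0, Hh0 by auto. C_field.
Qed.

Definition ces_integrand (t : R) (g : C -> C) (w : C) : C := (g w / (1 - RtoC t * w))%C.

Lemma ces_denominator_Cmod_ge (t : R) (w : C) : 0 <= t -> 1 - t * Cmod w <= Cmod (1 - RtoC t * w).
Proof.
  intros Ht.
  assert (H := Cmod_le_dist (1 - RtoC t * w) 1).
  replace (1 - (1 - RtoC t * w))%C with (RtoC t * w)%C in H by C_field.
  rewrite Cmod_1, Cmod_RtoC_mult, Rabs_pos_eq in H by lra. lra.
Qed.

Lemma ces_denominator_neq_0 (t : R) (w : C) :
  0 <= t < 1 -> Cmod w <= 1 -> (1 - RtoC t * w)%C <> 0%C.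
Proof.
  intros Ht Hw E. assert (H := ces_denominator_Cmod_ge t w (proj1 Ht)). rewrite E, Cmod_0 in H.
  assert (t * Cmod w <= t * 1) by (apply Rmult_le_compat_l; lra). lra.
Qed.

Lemma ces_integrand_Cmod_le (t : R) (g : C -> C) (w : C) (B : R) :
  0 <= t < 1 -> Cmod w <= 1 -> Cmod (g w) <= B -> Cmod (ces_integrand t g w) <= B / (1 - t).
Proof.
  intros Ht Hw Hg. unfold ces_integrand, Cdiv.
  assert (Hnz := ces_denominator_neq_0 t w Ht Hw).
  assert (Hdb := ces_denominator_Cmod_ge t w (proj1 Ht)).
  assert (t * Cmod w <= t * 1) by (apply Rmult_le_compat_l; lra).
  rewrite Cmod_mult, Cmod_inv by auto.
  apply Rmult_le_compat; auto; [apply Cmod_ge_0 | left; apply Rinv_0_lt_compat, Cmod_gt_0, Hnz |].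
  apply Rinv_le_contravar; lra.
Qed.

Lemma ces_integrand_0 (t : R) (g : C -> C) : ces_integrand t g 0%C = g 0%C.
Proof. unfold ces_integrand. generalize (g 0%C). intros c. C_field. Qed.

Lemma ces_integrand_minus (t : R) (g h : C -> C) :
  ces_integrand t (fun w => g w - h w)%C = (fun w => ces_integrand t g w - ces_integrand t h w)%C.
Proof. apply functional_extensionality. intros w. unfold ces_integrand, Cdiv. ring. Qed.

Lemma ces_integrand_differentiable (t : R) (g : C -> C) :
  0 <= t < 1 -> holD g -> C_differentiable_on_disc (ces_integrand t g).
Proof.
  intros Ht [Hg _] w Hw. destruct (Hg w Hw) as [lg Hlg].
  assert (Hnz := ces_denominator_neq_0 t w Ht (Rlt_le _ _ Hw)).
  assert (Hd : is_C_derive (fun x => 1 - RtoC t * x)%C w (- RtoC t)%C).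
  { eapply is_C_derive_ext_loc; [| apply (is_C_derive_affine 1 (- RtoC t) w)].
    exists 1. split; [lra |]. intros; C_field. }
  assert (Hinv := is_C_derive_comp Cinv _ w _ _ (is_C_derive_Cinv _ Hnz) Hd).
  eexists. exact (is_C_derive_mult g _ w _ _ Hlg Hinv).
Qed.

Lemma Ces_0 (t : R) (g : C -> C) : Ces t g 0%C = g 0%C.
Proof.
  unfold Ces. rewrite Cmod_0.
  destruct (Rlt_dec 0 1) as [_ | C1]; [| lra].
  destruct (Req_EM_T 0 0) as [_ | C2]; [reflexivity | lra].
Qed.

Lemma Ces_outside (t : R) (g : C -> C) (z : C) : ~ Cmod z < 1 -> Ces t g z = 0%C.
Proof. intros H. unfold Ces. destruct (Rlt_dec (Cmod z) 1); [contradiction | reflexivity]. Qed.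

Lemma Ces_eq_line_int (t : R) (g : C -> C) (z : C) :
  Cmod z < 1 -> z <> 0%C -> Ces t g z = (/ z * line_int (ces_integrand t g) 0 z)%C.
Proof.
  intros Hz Hn. unfold Ces.
  destruct (Rlt_dec (Cmod z) 1) as [_ | C1]; [| lra].
  destruct (Req_EM_T (Cmod z) 0) as [E | _]; [exfalso; apply Hn, Cmod_eq_0, E |].
  unfold line_int, CRInt. do 2 f_equal. apply functional_extensionality. intros s.
  unfold segment, ces_integrand. replace (0 + RtoC s * (z - 0))%C with (RtoC s * z)%C by C_field.
  replace (z - 0)%C with z by C_field. reflexivity.
Qed.

Section CesaroOperator.

Variables (t : R) (g : C -> C).
Hypotheses (Ht : 0 <= t < 1) (Hg : holD g).

Let u := ces_integrand t g.

Lemma ces_integrand_continuous_on_segment (z : C) : Cmod z < 1 -> Ccontinuous_on_segment u 0 z.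
Proof.
  intros Hz. apply (Ccontinuous_on_segment_in_ball u 0 z (Cmod z)); auto;
    [apply C_differentiable_on_disc_continuous, ces_integrand_differentiable; auto
    | rewrite Cmod_0; apply Cmod_ge_0 | lra].
Qed.

(* Integrating the first-order expansion [u 0 + ud x] of [u] along [[0, w]] gives
   [u 0 w + ud w^2 / 2], whence the derivative [ud / 2] at [0]. *)
Lemma is_C_derive_Ces_0 : exists l, is_C_derive (Ces t g) 0%C l.
Proof.
  destruct (ces_integrand_differentiable t g Ht Hg 0%C ltac:(rewrite Cmod_0; lra)) as [ud Hud].
  exists (ud / 2)%C. apply is_C_derive_Cmod. intros eps He.
  destruct (proj1 (is_C_derive_Cmod _ _ _) Hud eps He) as [d1 [Hd1 H1]].
  exists (Rmin d1 1). split; [apply Rmin_pos; lra |].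
  intros w Hw. replace (w - 0)%C with w in * by C_field.
  assert (Hw1 : Cmod w < d1) by (eapply Rlt_le_trans; [exact Hw | apply Rmin_l]).
  assert (Hw2 : Cmod w < 1) by (eapply Rlt_le_trans; [exact Hw | apply Rmin_r]).
  destruct (Ceq_dec w 0) as [-> | Nw].
  { replace (Ces t g 0 - Ces t g 0 - 0 * (ud / 2))%C with (RtoC 0) by C_field.
    rewrite Cmod_0. lra. }
  assert (Hwp : 0 < Cmod w) by (apply Cmod_gt_0; auto).
  set (aff := fun x => (u 0 + ud * x)%C).
  assert (B : Cmod (line_int (fun x => u x - aff x) 0 w)%C <= Cmod (w - 0) * (eps * Cmod w)).
  { apply line_int_Cmod_le.
    - intros s Hs. apply Ccontinuous_minus;
        [apply ces_integrand_continuous_on_segment, Hs; auto | apply Ccontinuous_affine].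
    - intros s Hs.
      replace (segment 0 w s) with (RtoC s * w)%C by (unfold segment; C_field).
      assert (Hsw := Cmod_RtoC_mult_le s w Hs).
      specialize (H1 (RtoC s * w)%C).
      replace (RtoC s * w - 0)%C with (RtoC s * w)%C in H1 by C_field.
      replace (u (RtoC s * w) - aff (RtoC s * w))%C with (u (RtoC s * w) - u 0 - RtoC s * w * ud)%C
        by (unfold aff; ring).
      eapply Rle_trans; [apply H1; lra | apply Rmult_le_compat_l; lra]. }
  rewrite line_int_minus in B
    by (auto using ces_integrand_continuous_on_segment; intros s _; apply Ccontinuous_affine).
  unfold aff in B. rewrite line_int_affine in B.
  rewrite Ces_eq_line_int, Ces_0 by auto.
  replace (/ w * line_int (ces_integrand t g) 0 w - g 0 - w * (ud / 2))%C
    with (/ w * (line_int u 0 w - (u 0 * w + ud * (w * w - 0 * 0) / 2)))%C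
    by (unfold u; rewrite ces_integrand_0; field; auto).
  rewrite Cmod_mult, Cmod_inv by auto. replace (w - 0)%C with w in B by C_field.
  apply Rle_trans with (/ Cmod w * (Cmod w * (eps * Cmod w))).
  - apply Rmult_le_compat_l; [left; apply Rinv_0_lt_compat; auto | exact B].
  - right. field. lra.
Qed.

Lemma is_C_derive_Ces_neq_0 (z : C) : Cmod z < 1 -> z <> 0%C -> exists l, is_C_derive (Ces t g) z l.
Proof.
  intros Hz Nz.
  assert (Hzp : 0 < Cmod z) by (apply Cmod_gt_0; auto).
  eexists. eapply is_C_derive_ext_loc;
    [| exact (is_C_derive_mult Cinv (fun w => line_int u 0 w) z _ _ (is_C_derive_Cinv z Nz)
               (is_C_derive_line_int_from_0 u z (ces_integrand_differentiable t g Ht Hg) Hz))].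
  exists (Rmin (Cmod z) (1 - Cmod z)). split; [apply Rmin_pos; lra |].
  intros w Hw.
  assert (Hw1 : Cmod (w - z) < Cmod z) by (eapply Rlt_le_trans; [exact Hw | apply Rmin_l]).
  assert (Hw2 : Cmod (w - z) < 1 - Cmod z) by (eapply Rlt_le_trans; [exact Hw | apply Rmin_r]).
  assert (Hwz := Cmod_le_dist z w). assert (Hzw := Cmod_le_dist w z). rewrite Cmod_minus_sym in Hzw.
  symmetry. apply Ces_eq_line_int; [lra |].
  intros ->. rewrite Cmod_0 in Hzw. lra.
Qed.

Theorem Ces_holD : holD (Ces t g).
Proof.
  split; [| intros z Hz; apply Ces_outside, Hz].
  intros z Hz. destruct (Ceq_dec z 0) as [-> | Nz].
  - apply is_C_derive_Ces_0.
  - apply is_C_derive_Ces_neq_0; auto.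
Qed.

Lemma Ces_Cmod_le (z : C) (B : R) : Cmod z < 1 ->
  (forall s, 0 <= s <= 1 -> Cmod (g (RtoC s * z)%C) <= B) -> Cmod (Ces t g z) <= B / (1 - t).
Proof.
  intros Hz Hb.
  assert (HB := Hb 0 ltac:(lra)). replace (RtoC 0 * z)%C with (RtoC 0) in HB by C_field.
  destruct (Ceq_dec z 0) as [-> | Nz].
  - rewrite Ces_0. apply Rle_trans with B; [exact HB |].
    assert (0 <= B) by (generalize (Cmod_ge_0 (g 0%C)); lra).
    apply Rle_div_r; [lra | nra].
  - assert (Hzp : 0 < Cmod z) by (apply Cmod_gt_0; auto).
    rewrite Ces_eq_line_int, Cmod_mult, Cmod_inv by auto.
    assert (Hl : Cmod (line_int u 0 z) <= Cmod (z - 0) * (B / (1 - t))).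
    { apply line_int_Cmod_le; [apply ces_integrand_continuous_on_segment, Hz |].
      intros s Hs. replace (segment 0 z s) with (RtoC s * z)%C by (unfold segment; C_field).
      apply ces_integrand_Cmod_le; auto.
      generalize (Cmod_RtoC_mult_le s z Hs); lra. }
    replace (z - 0)%C with z in Hl by C_field.
    apply Rle_trans with (/ Cmod z * (Cmod z * (B / (1 - t)))).
    + apply Rmult_le_compat_l; [left; apply Rinv_0_lt_compat; auto | exact Hl].
    + right. field. lra.
Qed.

End CesaroOperator.

Lemma Ces_minus (t : R) (g h : C -> C) (z : C) : 0 <= t < 1 -> holD g -> holD h ->
  (Ces t g z - Ces t h z)%C = Ces t (fun w => g w - h w)%C z.
Proof.
  intros Ht Hg Hh.
  destruct (Rlt_dec (Cmod z) 1) as [Hz | Hz]; [| rewrite !Ces_outside by auto; C_field].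
  destruct (Ceq_dec z 0) as [-> | Nz]; [rewrite !Ces_0; reflexivity |].
  rewrite !Ces_eq_line_int, ces_integrand_minus, line_int_minus
    by auto using ces_integrand_continuous_on_segment.
  ring.
Qed.

Lemma Ces_bounded (t : R) (g : C -> C) (M : R) : 0 <= t < 1 -> holD g ->
  (forall z, Cmod z < 1 -> Cmod (g z) <= M) ->
  forall z, Cmod z < 1 -> Cmod (Ces t g z) <= M / (1 - t).
Proof.
  intros Ht Hg HM z Hz. apply Ces_Cmod_le; auto.
  intros s Hs. apply HM. generalize (Cmod_RtoC_mult_le s z Hs). lra.
Qed.

Lemma Ces_close (t : R) (g h : C -> C) (r e : R) : 0 <= t < 1 -> holD g -> holD h -> r < 1 ->
  (forall w, Cmod w <= r -> Cmod (g w - h w) <= e) ->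
  forall z, Cmod z <= r -> Cmod (Ces t g z - Ces t h z) <= e / (1 - t).
Proof.
  intros Ht Hg Hh Hr He z Hz. rewrite Ces_minus by auto.
  apply Ces_Cmod_le; auto using holD_minus; [lra |].
  intros s Hs. apply He. generalize (Cmod_RtoC_mult_le s z Hs). lra.
Qed.

(** * Dilations and weighted bounds *)

(* Compactness of the square [[-1, 1]^2], with a continuity radius chosen at each point
   of the disc and a radius keeping away from the disc elsewhere. *)
Lemma Ccontinuous_uniform_on_closed_disc (g : C -> C) (r : R) :
  r < 1 -> Ccontinuous_on_disc g ->
  forall eps, 0 < eps -> exists d, 0 < d /\
    forall w w', Cmod w <= r -> Cmod (w' - w) < d -> Cmod (g w' - g w) < eps.
Proof.
  intros Hr Hc eps He.
  assert (Hex : forall p : C, exists d, 0 < d /\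
            (Cmod p <= r -> forall w, Cmod (w - p) < d -> Cmod (g w - g p) < eps / 2)).
  { intros p. destruct (Rle_dec (Cmod p) r) as [Hp | Hp].
    - destruct (Hc p ltac:(lra) (eps / 2) ltac:(lra)) as [d [Hd Hw]]. exists d. auto.
    - exists 1. split; [lra | intros; contradiction]. }
  set (ds := fun p => proj1_sig (constructive_indefinite_description _ (Hex p))).
  assert (Hds : forall p, 0 < ds p /\
            (Cmod p <= r -> forall w, Cmod (w - p) < ds p -> Cmod (g w - g p) < eps / 2))
    by (intros p; unfold ds; destruct (constructive_indefinite_description _ (Hex p)); exact a).
  set (D := fun p : C => if Rle_dec (Cmod p) r then ds p / 4 else (Cmod p - r) / 2).
  assert (HD : forall p, 0 < D p)
    by (intros p; unfold D; destruct (Rle_dec (Cmod p) r); [destruct (Hds p) |]; lra).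
  destruct (compactness_value_2d (-1) 1 (-1) 1 (fun x y => mkposreal (D (x, y)) (HD (x, y))))
    as [d Hd].
  exists d. split; [apply cond_pos |].
  intros w w' Hw Hww.
  assert (Hx : -1 <= fst w <= 1)
    by (apply Rabs_le_between; generalize (re_le_Cmod w); unfold Re; lra).
  assert (Hy : -1 <= snd w <= 1)
    by (apply Rabs_le_between;
        generalize (Rmax_r (Rabs (fst w)) (Rabs (snd w))) (Rmax_Cmod w); lra).
  apply NNPP. intros Hneg.
  apply (Hd (fst w) (snd w) Hx Hy). intros [x [y [_ [_ [Hu [Hv Hdd]]]]]].
  apply Hneg. simpl in Hu, Hv, Hdd.
  set (p := (x, y) : C) in *.
  assert (Hwp : Cmod (w - p) < 2 * D p) by (apply Cmod_lt_2Rmax; exact Hu || exact Hv).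
  assert (Htri := Cmod_le_dist w p). rewrite Cmod_minus_sym in Htri.
  unfold D in Hwp, Hdd. destruct (Rle_dec (Cmod p) r) as [Hp | Hp]; [| lra].
  destruct (Hds p) as [Hdp Hg].
  assert (Hw'p : Cmod (w' - p) < ds p).
  { replace (w' - p)%C with ((w' - w) + (w - p))%C by C_field.
    eapply Rle_lt_trans; [apply Cmod_triangle | lra]. }
  assert (A1 := Hg Hp w ltac:(lra)). assert (A2 := Hg Hp w' Hw'p).
  replace (g w' - g w)%C with ((g w' - g p) + - (g w - g p))%C by C_field.
  eapply Rle_lt_trans; [apply Cmod_triangle |]. rewrite Cmod_opp. lra.
Qed.

Definition dilate (rho : R) (f : C -> C) (z : C) : C :=
  if Rlt_dec (Cmod z) 1 then f (RtoC rho * z)%C else 0%C.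

Lemma dilate_in_disc (rho : R) (f : C -> C) (z : C) :
  Cmod z < 1 -> dilate rho f z = f (RtoC rho * z)%C.
Proof. intros Hz. unfold dilate. destruct (Rlt_dec (Cmod z) 1); [reflexivity | contradiction]. Qed.

Lemma holD_dilate (rho : R) (f : C -> C) : 0 <= rho <= 1 -> holD f -> holD (dilate rho f).
Proof.
  intros Hr [Hf Hf0]. split.
  - intros z Hz. unfold inD in Hz.
    destruct (Hf (RtoC rho * z)%C) as [lf Hlf];
      [unfold inD; generalize (Cmod_RtoC_mult_le rho z Hr); lra |].
    assert (Hl : is_C_derive (fun x => RtoC rho * x)%C z (RtoC rho)).
    { eapply is_C_derive_ext_loc; [| apply (is_C_derive_affine 0 (RtoC rho) z)].
      exists 1. split; [lra | intros; C_field]. }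
    eexists. eapply is_C_derive_ext_loc; [| exact (is_C_derive_comp f _ z _ _ Hlf Hl)].
    exists (1 - Cmod z). split; [lra |]. intros w Hw.
    symmetry. apply dilate_in_disc. generalize (Cmod_le_dist z w). lra.
  - intros z Hz. unfold dilate. destruct (Rlt_dec (Cmod z) 1); [contradiction | reflexivity].
Qed.

Lemma dilate_close (f : C -> C) (r e : R) : holD f -> r < 1 -> 0 < e ->
  exists rho, 0 <= rho < 1 /\ forall z, Cmod z <= r -> Cmod (dilate rho f z - f z) < e.
Proof.
  intros Hf Hr He.
  destruct (Ccontinuous_uniform_on_closed_disc f r Hr
              (C_differentiable_on_disc_continuous f (proj1 Hf)) e He) as [d [Hd Hu]].
  exists (Rmax 0 (1 - d / 2)). split; [split; [apply Rmax_l | apply Rmax_lub_lt; lra] |].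
  intros z Hz.
  rewrite dilate_in_disc by lra. apply Hu; auto.
  replace (RtoC (Rmax 0 (1 - d / 2)) * z - z)%C with (RtoC (Rmax 0 (1 - d / 2) - 1) * z)%C
    by C_field.
  rewrite Cmod_RtoC_mult, Rabs_left1 by (apply Rle_minus, Rlt_le, Rmax_lub_lt; lra).
  assert (Hz0 := Cmod_ge_0 z). generalize (Rmax_r 0 (1 - d / 2)). nra.
Qed.

Section Weights.

Variable v : R -> R.
Hypothesis Hv : is_weight v.

Lemma wbound_Cmod_le (h : C -> C) (K : R) (z : C) :
  wbound v h K -> Cmod z < 1 -> Cmod (h z) <= K / v (Cmod z).
Proof.
  intros Hb Hz. pose proof Hv as [_ [_ Hp]].
  assert (Hvz := Hp (Cmod z) (conj (Cmod_ge_0 z) Hz)).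
  apply (Rmult_le_reg_r (v (Cmod z))); auto.
  unfold Rdiv. rewrite Rmult_assoc, Rinv_l, Rmult_1_r by lra. apply Hb, Hz.
Qed.

Lemma wbound_of_Cmod_le (h : C -> C) (K : R) :
  (forall z, Cmod z < 1 -> Cmod (h z) <= K / v (Cmod z)) -> wbound v h K.
Proof.
  intros Hb z Hz. pose proof Hv as [_ [_ Hp]].
  assert (Hvz := Hp (Cmod z) (conj (Cmod_ge_0 z) Hz)).
  apply (Rmult_le_reg_r (/ v (Cmod z))); [apply Rinv_0_lt_compat, Hvz |].
  rewrite Rmult_assoc, Rinv_r, Rmult_1_r by lra. apply Hb, Hz.
Qed.

Lemma wbound_pos (h : C -> C) : Hinf v h -> exists K, 0 < K /\ wbound v h K.
Proof.
  intros [_ [c Hc]]. exists (Rmax c 1). split; [generalize (Rmax_r c 1); lra |].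
  intros z Hz. eapply Rle_trans; [apply Hc, Hz | apply Rmax_l].
Qed.

Lemma wbound_fscal (a : C) (h : C -> C) (K : R) :
  wbound v h K -> wbound v (fscal a h) (Cmod a * K).
Proof.
  intros Hb z Hz. unfold fscal. rewrite Cmod_mult, Rmult_assoc.
  apply Rmult_le_compat_l; [apply Cmod_ge_0 | apply Hb, Hz].
Qed.

Lemma Ces_wbound (t : R) (g : C -> C) (K : R) : 0 <= t < 1 -> holD g ->
  wbound v g K -> wbound v (Ces t g) (K / (1 - t)).
Proof.
  intros Ht Hg Hb. apply wbound_of_Cmod_le. intros z Hz.
  pose proof Hv as [_ [Hm Hp]].
  replace (K / (1 - t) / v (Cmod z)) with (K / v (Cmod z) / (1 - t))
    by (field; split; [lra | apply Rgt_not_eq, Hp; split; auto using Cmod_ge_0]).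
  apply Ces_Cmod_le; auto. intros s Hs.
  assert (Hsz := Cmod_RtoC_mult_le s z Hs).
  eapply Rle_trans; [apply (wbound_Cmod_le g K); [exact Hb | lra] |].
  assert (Hvz : 0 < v (Cmod z)) by (apply Hp; split; auto using Cmod_ge_0).
  assert (Hk : 0 <= K)
    by (eapply Rle_trans; [| apply (Hb z Hz)]; apply Rmult_le_pos; [apply Cmod_ge_0 | lra]).
  unfold Rdiv. apply Rmult_le_compat_l; auto.
  apply Rinv_le_contravar; [exact Hvz | apply Hm; auto using Cmod_ge_0].
Qed.

Lemma dilate_wbound (rho : R) (f : C -> C) (K : R) :
  0 <= rho <= 1 -> wbound v f K -> wbound v (dilate rho f) K.
Proof.
  intros Hr Hb z Hz. pose proof Hv as [_ [Hm _]]. unfold inD in Hz.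
  rewrite dilate_in_disc by exact Hz.
  assert (Hrz := Cmod_RtoC_mult_le rho z Hr).
  apply Rle_trans with (Cmod (f (RtoC rho * z)%C) * v (Cmod (RtoC rho * z)%C)).
  - apply Rmult_le_compat_l; [apply Cmod_ge_0 | apply Hm; auto using Cmod_ge_0].
  - apply Hb. unfold inD. lra.
Qed.

Lemma dilate_bounded (rho : R) (f : C -> C) (K : R) : 0 <= rho < 1 -> wbound v f K ->
  forall z, Cmod z < 1 -> Cmod (dilate rho f z) <= K / v rho.
Proof.
  intros Hr Hb z Hz. pose proof Hv as [_ [Hm Hp]].
  rewrite dilate_in_disc by exact Hz.
  assert (Hrz : Cmod (RtoC rho * z) <= rho).
  { rewrite Cmod_RtoC_mult, Rabs_pos_eq by lra. assert (H0 := Cmod_ge_0 z). nra. }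
  eapply Rle_trans; [apply (wbound_Cmod_le f K); [exact Hb | lra] |].
  assert (Hk : 0 <= K).
  { eapply Rle_trans; [| apply (Hb 0%C); unfold inD; rewrite Cmod_0; lra].
    rewrite Cmod_0. apply Rmult_le_pos; [apply Cmod_ge_0 | left; apply Hp; lra]. }
  unfold Rdiv. apply Rmult_le_compat_l; auto.
  apply Rinv_le_contravar; [apply Hp; lra | apply Hm; [apply Cmod_ge_0 | exact Hrz | lra]].
Qed.

Lemma H0_of_bounded (h : C -> C) (M : R) : filterlim v (at_left 1) (locally 0) -> holD h ->
  (forall z, Cmod z < 1 -> Cmod (h z) <= M) -> H0 v h.
Proof.
  intros Hv0 Hh Hb. split; [exact Hh |].
  intros eps He. pose proof Hv as [_ [_ Hp]].
  set (M' := Rmax M 1).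
  assert (HM' : 0 < M') by (unfold M'; generalize (Rmax_r M 1); lra).
  assert (HeM : 0 < eps / M') by (apply Rdiv_lt_0_compat; auto).
  destruct (proj1 (filterlim_locally _ _) Hv0 (mkposreal _ HeM)) as [d Hd].
  exists (1 - d). split; [generalize (cond_pos d); lra |].
  intros z Hz1 Hz2.
  assert (Hvz : Rabs (v (Cmod z) - 0) < eps / M').
  { apply (Hd (Cmod z)); [| exact Hz2].
    apply (norm_compat1 (K:=R_AbsRing) (V:=R_NormedModule)). change (Rabs (Cmod z - 1) < d).
    rewrite Rabs_left1 by lra. lra. }
  assert (Hvp := Hp (Cmod z) (conj (Cmod_ge_0 z) Hz2)).
  rewrite Rminus_0_r, Rabs_pos_eq in Hvz by lra.
  assert (Hhz : Cmod (h z) <= M') by (eapply Rle_trans; [apply Hb, Hz2 | apply Rmax_l]).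
  assert (E : M' * (eps / M') = eps) by (field; lra).
  assert (H0 := Cmod_ge_0 (h z)). nra.
Qed.

Lemma H0_approximation (t : R) (f : C -> C) (K r e : R) :
  filterlim v (at_left 1) (locally 0) -> 0 <= t < 1 -> holD f -> wbound v f K -> r < 1 -> 0 < e ->
  exists fr, H0 v fr /\ H0 v (Ces t fr) /\ wbound v fr K /\
    forall z, Cmod z <= r -> Cmod (fr z - f z) < e /\ Cmod (Ces t fr z - Ces t f z) < e.
Proof.
  intros Hv0 Ht Hf HfK Hr He.
  destruct (dilate_close f r (e * (1 - t) / 2) Hf Hr) as [rho [Hrho Hclose]];
    [apply Rdiv_lt_0_compat; [apply Rmult_lt_0_compat |]; lra |].
  assert (Hfr : holD (dilate rho f)) by (apply holD_dilate; auto; lra).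
  assert (Hbd := dilate_bounded rho f K Hrho HfK).
  exists (dilate rho f). split; [| split; [| split]].
  - exact (H0_of_bounded _ _ Hv0 Hfr Hbd).
  - exact (H0_of_bounded _ _ Hv0 (Ces_holD t _ Ht Hfr) (Ces_bounded t _ _ Ht Hfr Hbd)).
  - apply dilate_wbound; auto; lra.
  - intros z Hz. split.
    + specialize (Hclose z Hz). assert (e * (1 - t) <= e) by nra. lra.
    + eapply Rle_lt_trans.
      * apply (Ces_close t _ f r (e * (1 - t) / 2) Ht Hfr Hf Hr); [| exact Hz].
        intros w Hw. left. apply Hclose, Hw.
      * replace (e * (1 - t) / 2 / (1 - t)) with (e / 2) by (field; lra). lra.
Qed.

(* Rescaling by [K] transfers the continuity of [F] on [Uv] to the ball of radius [K]. *)
Lemma in_X_continuity (F : (C -> C) -> C) (f : C -> C) (K : R) :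
  in_X v F -> holD f -> 0 < K -> wbound v f K ->
  forall eps, 0 < eps -> exists r delta, 0 <= r < 1 /\ 0 < delta /\
    forall g, holD g -> wbound v g K ->
      (forall z, Cmod z <= r -> Cmod (g z - f z) < delta) -> Cmod (F g - F f) < eps.
Proof.
  intros [[_ Hlin] Hc] Hf HK HfK eps He.
  set (a := RtoC (/ K)).
  assert (Ha : Cmod a = / K)
    by (unfold a; rewrite Cmod_R, Rabs_pos_eq; [reflexivity | left; apply Rinv_0_lt_compat, HK]).
  assert (Hball : forall g, holD g -> wbound v g K -> Uv v (fscal a g)).
  { intros g Hg HgK. split.
    - destruct Hg as [Hg Hg0]. split.
      + intros z Hz. destruct (Hg z Hz) as [l Hl].
        exists (a * l)%C. exact (is_C_derive_scal a g z l Hl).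
      + intros z Hz. unfold fscal. rewrite Hg0 by exact Hz. apply Cmult_0_r.
    - replace 1 with (Cmod a * K) by (rewrite Ha; field; lra). apply wbound_fscal, HgK. }
  assert (HeK : 0 < eps / K) by (apply Rdiv_lt_0_compat; auto).
  destruct (Hc (fscal a f) (Hball f Hf HfK) (eps / K) HeK) as [r [d [Hr [Hd Hcont]]]].
  exists r, (d * K). repeat split; try lra; [apply Rmult_lt_0_compat; auto |].
  intros g Hg HgK Hgf.
  assert (Hs := Hcont (fscal a g) (Hball g Hg HgK)).
  rewrite !Hlin in Hs by (split; [| exists K]; auto).
  assert (E : (F g - F f)%C = (RtoC K * (a * F g - a * F f))%C)
    by (unfold a; rewrite RtoC_inv; [field; intros E; apply RtoC_inj in E |]; lra).
  rewrite E, Cmod_mult, Cmod_R, Rabs_pos_eq by lra.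
  assert (Hlt : Cmod (a * F g - a * F f) < eps / K).
  { apply Hs. intros z Hz. unfold fscal.
    replace (a * g z - a * f z)%C with (a * (g z - f z))%C by ring.
    rewrite Cmod_mult, Ha.
    apply (Rmult_lt_reg_l K); auto. rewrite <- Rmult_assoc, Rinv_r, Rmult_1_l by lra.
    rewrite Rmult_comm. apply Hgf, Hz. }
  assert (E2 : K * (eps / K) = eps) by (field; lra). nra.
Qed.

End Weights.

Theorem lemma2p6 (v : R -> R) (t : R)
  (Hv : is_weight v) (Hv0 : filterlim v (at_left 1) (locally 0))
  (Ht : 0 <= t < 1)
  (phi : (C -> C) -> C) (Hphi : in_dual0 v phi)
  (F G : (C -> C) -> C) (HF : in_X v F) (HG : in_X v G)
  (HFphi : forall h, H0 v h -> F h = phi h)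
  (HGphi : forall h, H0 v h -> G h = phi (Ces t h))
  (f : C -> C) (Hf : Hinf v f) :
  G f = F (Ces t f).
Proof.
  destruct (wbound_pos v f Hf) as [K [HK HfK]]. destruct Hf as [Hfh _].
  assert (HCf := Ces_holD t f Ht Hfh).
  apply Ceq_minus, Cmod_eq_0_of_small. intros eps He.
  destruct (in_X_continuity v G f K HG Hfh HK HfK (eps / 2))
    as [r1 [d1 [Hr1 [Hd1 HG1]]]]; [lra |].
  destruct (in_X_continuity v F (Ces t f) (K / (1 - t)) HF HCf ltac:(apply Rdiv_lt_0_compat; lra)
              (Ces_wbound v Hv t f K Ht Hfh HfK) (eps / 2)) as [r2 [d2 [Hr2 [Hd2 HF2]]]]; [lra |].
  destruct (H0_approximation v Hv t f K (Rmax r1 r2) (Rmin d1 d2) Hv0 Ht Hfh HfK)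
    as [fr [H0fr [H0Cfr [HfrK Hclose]]]]; [apply Rmax_lub_lt; lra | apply Rmin_pos; lra |].
  assert (Hclose1 : forall z, Cmod z <= r1 -> Cmod (fr z - f z) < d1)
    by (intros z Hz; eapply Rlt_le_trans; [apply Hclose; eapply Rle_trans; [exact Hz | apply Rmax_l]
                                           | apply Rmin_l]).
  assert (Hclose2 : forall z, Cmod z <= r2 -> Cmod (Ces t fr z - Ces t f z) < d2)
    by (intros z Hz; eapply Rlt_le_trans; [apply Hclose; eapply Rle_trans; [exact Hz | apply Rmax_r]
                                           | apply Rmin_r]).
  assert (A1 := HG1 fr (proj1 H0fr) HfrK Hclose1).
  assert (A2 := HF2 (Ces t fr) (proj1 H0Cfr) (Ces_wbound v Hv t fr K Ht (proj1 H0fr) HfrK) Hclose2).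
  replace (G f - F (Ces t f))%C with (- (G fr - G f) + (F (Ces t fr) - F (Ces t f)))%C
    by (rewrite HGphi, HFphi by auto; ring).
  eapply Rle_lt_trans; [apply Cmod_triangle |]. rewrite Cmod_opp. lra.
Qed.
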